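(* A pargoid $\mathbf{A}=\langle A,\cdot\rangle$ is combinatorially complete if and only if (i) there exist $s,k\in A$ making $\langle A,\cdot,s,k\rangle$ a semicombinatory algebra, and (ii) either $\mathbf{A}$ is total or $\mathbf{A}$ contains a left passive element.
   Context: A pargoid is a nonempty set $A$ with a partial binary operation $\cdot$ (application); it is total if $\cdot$ is everywhere defined. Products associate to the left, $xyz=(xy)z$, and a compound product is defined only if all its sub-products are defined (strictness). Kleene equality $M\simeq N$ means: if either side is defined then both are defined and equal. An element $a\in A$ is left passive if $a\cdot x$ is undefined for every $x\in A$. The polynomial operations of $\mathbf{A}$ form the least set of partial finitary operations on $A$ containing $\cdot$, all projections $(a_0,\dots,a_{n-1})\mapsto a_i$, and all nullary constant operations with value $a\in A$, closed under composition $f(g_0,\dots,g_{n-1})(\bar x)\simeq f(g_0(\bar x),\dots,g_{n-1}(\bar x))$ (defined only if every $g_i(\bar x)$ is defined and $f$ is defined at the resulting tuple). $\mathbf{A}$ is combinatorially complete if for all $n\ge 1$ and every $n$-ary polynomial operation $p$ of $\mathbf{A}$ there is $a\in A$ such that for all $x_1,\dots,x_n\in A$, $a x_1\cdots x_n\simeq p(x_1,\dots,x_n)$. A semicombinatory algebra is a pargoid together with elements $s,k$ such that for all $x,y,z\in A$: $sxyz\simeq xz(yz)$, and $kxy$ is defined and equals $x$. *)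

From mathcomp Require Import all_boot.
Set Implicit Arguments. Unset Strict Implicit. Unset Printing Implicit Defensive.

Section Pargoid.
Variable A : Type.
Variable app : A -> A -> option A.

(* Left-associated iterated product a x_1 ... x_n, strict:
   defined only if every prefix product is defined. *)
Fixpoint apps (o : option A) (l : seq A) : option A :=
  match l with
  | [::] => o
  | x :: l' => apps (obind (fun u => app u x) o) l'
  end.

(* Partial n-ary operations on A are represented by their graphs:
   R x y  means  "the operation is defined at the tuple x with value y". *)
Definition pop (n : nat) := ('I_n -> A) -> A -> Prop.

(* composition f(g_0,...,g_{m-1}), strict *)
Definition pcomp (m n : nat) (f : pop m) (g : 'I_m -> pop n) : pop n :=
  fun x y => exists z : 'I_m -> A, (forall j, g j x (z j)) /\ f z y.

Inductive polyop : forall n, pop n -> Prop :=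
  | polyop_app : polyop (fun (x : 'I_2 -> A) y => app (x ord0) (x ord_max) = Some y)
  | polyop_proj n (i : 'I_n) : polyop (fun (x : 'I_n -> A) y => y = x i)
  | polyop_const (a : A) : polyop (fun (_ : 'I_0 -> A) y => y = a)
  | polyop_comp m n (f : pop m) (g : 'I_m -> pop n) :
      polyop f -> (forall j, polyop (g j)) -> polyop (pcomp f g).

Definition comb_complete : Prop :=
  forall n, 1 <= n -> forall p : pop n, polyop p ->
    exists a : A, forall (x : 'I_n -> A) (y : A),
      apps (Some a) [seq x i | i <- enum 'I_n] = Some y <-> p x y.

Definition semicombinatory (s k : A) : Prop :=
  (forall x y z : A,
     apps (Some s) [:: x; y; z] =
     obind (fun u => obind (fun v => app u v) (app y z)) (app x z))
  /\ (forall x y : A, apps (Some k) [:: x; y] = Some x).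

Definition total_pargoid : Prop := forall x y : A, exists z, app x y = Some z.

Definition left_passive (a : A) : Prop := forall x : A, app a x = None.

End Pargoid.

From Pilot Require Import Defs.
From mathcomp Require Import all_boot.
From Stdlib Require Import Classical.
Set Implicit Arguments. Unset Strict Implicit. Unset Printing Implicit Defensive.

(* Given [s] and [k], bracket abstraction
   (λx.x = s k k, λx.y = k y, λx.t u = s (λx.t) (λx.u)) produces such an [a] whenever the
   abstracted closed term is defined; the Kleene equation [s x y z ≃ x z (y z)] makes the
   abstraction correct also where the term is undefined.  If the abstracted term is
   undefined, the represented operation is nowhere defined: this cannot happen in a total
   pargoid, and a left passive element represents it.  Conversely, [k] and [s] represent
   x_0 and x_0 x_2 (x_1 x_2), and if [a b] is undefined then an element representing the
   unary constant [a b] is left passive. *)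

Lemma eq_option (T : Type) (o1 o2 : option T) :
  (forall y, o1 = Some y <-> o2 = Some y) -> o1 = o2.
Proof.
case: o1 => [a|] eq12; last by case: o2 eq12 => // b /(_ b) [_ /(_ erefl)].
by symmetry; apply/eq12.
Qed.

Section Pargoid.
Variables (A : Type) (app : A -> A -> option A).

Definition papp (o1 o2 : option A) : option A :=
  obind (fun a => obind (app a) o2) o1.

Lemma papp_SomeP o1 o2 y :
  papp o1 o2 = Some y <-> exists u v, [/\ o1 = Some u, o2 = Some v & app u v = Some y].
Proof.
split; last by case=> u [v [-> -> uv]].
by case: o1 => [u|] //; case: o2 => [v|] // uv; exists u, v.
Qed.

Lemma papp_None_r o : papp o None = None.
Proof. by case: o. Qed.

Lemma apps_None l : apps app None l = None.
Proof. by elim: l. Qed.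

Lemma apps_rcons o l y : apps app o (rcons l y) = papp (apps app o l) (Some y).
Proof. by elim: l o => /=. Qed.

Lemma apps_passive e l : left_passive app e -> 0 < size l -> apps app (Some e) l = None.
Proof. by case: l => //= x l e_passive _; rewrite e_passive apps_None. Qed.

Inductive term : Type := Var of nat | Cst of A | Ap of term & term.

Fixpoint eval (r : nat -> A) (t : term) : option A :=
  match t with
  | Var i => Some (r i)
  | Cst a => Some a
  | Ap t u => papp (eval r t) (eval r u)
  end.

Lemma eq_eval r r' t : r =1 r' -> eval r t = eval r' t.
Proof. by move=> rr'; elim: t => [i|a|t IHt u IHu] //=; rewrite ?rr' ?IHt ?IHu. Qed.

Lemma eval_total : total_pargoid app -> forall r t, exists v, eval r t = Some v.
Proof.
move=> total r; elim=> [i|a|t [v tv] u [w uw]] /=; try by eexists.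
by rewrite tv uw; exact: total.
Qed.

Fixpoint subst (sg : nat -> term) (t : term) : term :=
  match t with
  | Var i => sg i
  | Cst a => Cst a
  | Ap t u => Ap (subst sg t) (subst sg u)
  end.

Lemma eval_subst r r' sg t :
  (forall i, eval r (sg i) = Some (r' i)) -> eval r (subst sg t) = eval r' t.
Proof. by move=> sgP; elim: t => [i|a|t IHt u IHu] //=; rewrite ?sgP ?IHt ?IHu. Qed.

Fixpoint vars_lt (n : nat) (t : term) : bool :=
  match t with
  | Var i => i < n
  | Cst _ => true
  | Ap t u => vars_lt n t && vars_lt n u
  end.

Definition represents n (p : pop A n) (t : term) : Prop :=
  forall (r : nat -> A) (x : 'I_n -> A), (forall i : 'I_n, r i = x i) ->
    forall y, p x y <-> eval r t = Some y.

Definition proj_op n (i : 'I_n) : pop A n := fun x y => y = x i.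

(* ['I_0] is empty, so the inner family of the composition is immaterial. *)
Definition const_op n (c : A) : pop A n :=
  Defs.pcomp (fun (_ : 'I_0 -> A) y => y = c) (fun _ _ _ => False).

Definition app_op n (p q : pop A n) : pop A n :=
  Defs.pcomp (fun x y => app (x ord0) (x ord_max) = Some y)
             (fun j : 'I_2 => if j == ord0 then p else q).

Lemma polyop_const_op n c : polyop app (@const_op n c).
Proof. by apply: polyop_comp; [exact: polyop_const | case]. Qed.

Lemma const_opP n c (x : 'I_n -> A) y : @const_op n c x y <-> y = c.
Proof. by split=> [[z [_ ->]] | ->]; last by exists (fun=> c); split; first case. Qed.

Lemma polyop_app_op n (p q : pop A n) :
  polyop app p -> polyop app q -> polyop app (app_op p q).
Proof. by move=> pP qP; apply: polyop_comp => [|j]; [exact: polyop_app | case: ifP]. Qed.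

Lemma app_opP n (p q : pop A n) x y :
  app_op p q x y <-> exists u v, [/\ p x u, q x v & app u v = Some y].
Proof.
split=> [[z [pqz zy]] | [u [v [pu qv uv]]]].
  by exists (z ord0), (z ord_max); split; [exact: (pqz ord0) | exact: (pqz ord_max) |].
exists (fun j : 'I_2 => if j == ord0 then u else v); split=> //.
by move=> j; case: ifP.
Qed.

Lemma term_represented n t :
  vars_lt n t -> exists2 p : pop A n, polyop app p & represents p t.
Proof.
elim: t => [i|a|t IHt u IHu] /=.
- move=> lt_i_n; exists (proj_op (Ordinal lt_i_n)); first exact: polyop_proj.
  by move=> r x rx y; rewrite /proj_op -rx; split=> [->|[]].
- exists (const_op a); first exact: polyop_const_op.
  by move=> r x _ y; rewrite const_opP; split=> [->|[]].
- case/andP=> /IHt[p pP tP] /IHu[q qP uP].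
  exists (app_op p q); first exact: polyop_app_op.
  move=> r x rx y; have [tE uE] := (tP r x rx, uP r x rx).
  rewrite app_opP papp_SomeP.
  by split=> [] [v [w [pv qw vw]]]; exists v, w; (split; [exact/tE | exact/uE |]).
Qed.

Lemma comb_complete_term :
  comb_complete app -> forall n t, 0 < n -> vars_lt n t ->
  exists a, forall (d : A) (l : n.-tuple A), apps app (Some a) l = eval (nth d l) t.
Proof.
move=> cc n t n_gt0 /term_represented[p pP tP].
have [a aP] := cc n n_gt0 p pP.
exists a => d l; apply: eq_option => y.
rewrite -{1}(map_tnth_enum l) aP; apply: tP => i.
by apply: set_nth_default; rewrite size_tuple.
Qed.

Lemma comb_complete_semicombinatory :
  comb_complete app -> exists s k, semicombinatory app s k.
Proof.
move=> /comb_complete_term cc_term.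
have [s sP] := cc_term 3 (Ap (Ap (Var 0) (Var 2)) (Ap (Var 1) (Var 2))) isT isT.
have [k kP] := cc_term 2 (Var 0) isT isT.
exists s, k; split=> [x y z | x y]; first exact: (sP x [tuple x; y; z]).
exact: (kP x [tuple x; y]).
Qed.

Lemma comb_complete_total_or_passive :
  comb_complete app -> total_pargoid app \/ exists e, left_passive app e.
Proof.
move=> /comb_complete_term cc_term.
case: (classic (exists a b, app a b = None)) => [[a [b ab]] | defined].
- right; have [e eP] := cc_term 1 (Ap (Cst a) (Cst b)) isT isT.
  by exists e => x; rewrite -ab; exact: (eP x [tuple x]).
- left=> a b; case ab: (app a b) => [c|]; first by exists c.
  by case: defined; exists a, b.
Qed.

Section Combinators.
Variable k : A.
Hypothesis k_ax : forall x y, apps app (Some k) [:: x; y] = Some x.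

(* [k T u] is [T] when [u] is defined; guarding by the inner terms keeps composition strict
   even in the arguments the outer operation ignores. *)
Definition guard (u T : term) : term := Ap (Ap (Cst k) T) u.

Lemma eval_guard r u T : eval r (guard u T) = if eval r u is Some _ then eval r T else None.
Proof.
rewrite /=; case: (eval r T) => [a|]; case: (eval r u) => [b|] //=.
  exact: k_ax.
by rewrite papp_None_r.
Qed.

Lemma eval_guards r ts T :
  eval r (foldr guard T ts) = if all (fun u => isSome (eval r u)) ts then eval r T else None.
Proof. by elim: ts => [|u ts IH] //; rewrite eval_guard IH /=; case: (eval r u). Qed.

Lemma polyop_represented n (p : pop A n) : polyop app p -> exists t, represents p t.
Proof.
elim=> {n p} [|n i|a|m n f g _ [tf tfP] _ /fin_all_exists[tg tgP]].
- by exists (Ap (Var 0) (Var 1)) => r x rx y /=; rewrite (rx ord0) (rx ord_max).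
- by exists (Var i) => r x rx y /=; rewrite rx; split=> [->|[]].
- by exists (Cst a) => r x _ y /=; split=> [->|[]].
pose sg i := if insub i is Some j then tg j else Var i.
exists (foldr guard (subst sg tf) [seq tg j | j <- enum 'I_m]) => r x rx y.
have evalP z : (forall j, g j x (z j)) -> f z y <-> eval r (subst sg tf) = Some y.
  move=> gz; pose r' i := if insub i is Some j then z j else r i.
  rewrite (@eval_subst r r') => [|i]; first by apply: tfP => j; rewrite /r' valK.
  by rewrite /sg /r'; case: insubP => [j _ _|] //; exact/(tgP j r x rx)/gz.
rewrite eval_guards all_map; split.
  case=> z [gz fz]; rewrite ifT; first exact/evalP.
  by apply/allP => j _ /=; rewrite (tgP j r x rx (z j)).1.
case: ifP => // /allP defined.
have /fin_all_exists[z zP] j : exists v, eval r (tg j) = Some v.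
  move: (defined j (mem_enum _ j)) => /=.
  by case: (eval r (tg j)) => // v _; exists v.
have gz j : g j x (z j) by apply/(tgP j r x rx).
by move/(evalP z gz) => fz; exists z.
Qed.

Variable s : A.
Hypothesis s_ax : forall x y z, apps app (Some s) [:: x; y; z] = papp (app x z) (app y z).

Fixpoint abstract (n : nat) (t : term) : term :=
  match t with
  | Var i => if i == n then Ap (Ap (Cst s) (Cst k)) (Cst k) else Ap (Cst k) (Var i)
  | Cst a => Ap (Cst k) (Cst a)
  | Ap t u => Ap (Ap (Cst s) (abstract n t)) (abstract n u)
  end.

Lemma skk y : papp (papp (papp (Some s) (Some k)) (Some k)) (Some y) = Some y.
Proof.
have := k_ax y y; rewrite /=; case ky: (app k y) => [c|] // _.
have := k_ax y c; rewrite /= ky /= => kyc.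
by transitivity (apps app (Some s) [:: k; k; y]); rewrite // s_ax ky.
Qed.

Lemma eval_abstract n r t y :
  papp (eval r (abstract n t)) (Some y) = eval [eta r with n |-> y] t.
Proof.
elim: t => [i|a|t IHt u IHu] /=.
- by case: eqP => _; [exact: skk | exact: k_ax].
- exact: k_ax.
rewrite -IHt -IHu.
case: (eval r (abstract n t)) => [a|] //.
case: (eval r (abstract n u)) => [b|]; first exact: s_ax.
by rewrite !papp_None_r.
Qed.

Fixpoint abstractn (n : nat) (t : term) : term :=
  if n is n'.+1 then abstractn n' (abstract n' t) else t.

Lemma apps_abstractn r l t :
  apps app (eval r (abstractn (size l) t)) l = eval (fun i => nth (r i) l i) t.
Proof.
elim/last_ind: l t => [|l y IHl] t /=.
  by apply: eq_eval => i; rewrite nth_nil.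
rewrite size_rcons /= apps_rcons IHl eval_abstract; apply: eq_eval => i /=.
by rewrite nth_rcons; case: ltngtP => // gt_i_l; rewrite nth_default // ltnW.
Qed.

End Combinators.

Lemma comb_complete_of_semicombinatory s k :
  semicombinatory app s k -> total_pargoid app \/ (exists e, left_passive app e) ->
  comb_complete app.
Proof.
case=> s_ax k_ax total_or_passive n n_gt0 p /(polyop_represented k_ax)[t tP].
pose r0 (_ : nat) := k.
have size_args (x : 'I_n -> A) : size [seq x i | i <- enum 'I_n] = n.
  by rewrite size_map size_enum_ord.
have abstractP x y :
    apps app (eval r0 (abstractn k s n t)) [seq x i | i <- enum 'I_n] = Some y <-> p x y.
  have := apps_abstractn k_ax s_ax r0 [seq x i | i <- enum 'I_n] t.
  rewrite size_args => ->; symmetry; apply: tP => i.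
  by rewrite (nth_map i) ?size_enum_ord // nth_ord_enum.
case def_a: (eval r0 (abstractn k s n t)) => [a|].
  by exists a => x y; rewrite -def_a; exact: abstractP.
case: total_or_passive => [total | [e e_passive]].
  by have [v] := eval_total total r0 (abstractn k s n t); rewrite def_a.
exists e => x y; rewrite apps_passive ?size_args //.
by split=> // /abstractP; rewrite def_a apps_None.
Qed.

End Pargoid.

Theorem theorem2 (A : Type) (HA : inhabited A) (app : A -> A -> option A) :
  comb_complete app <->
  ((exists s k : A, semicombinatory app s k) /\
   (total_pargoid app \/ exists a : A, left_passive app a)).
Proof.
split=> [cc | [[s [k skP]] total_or_passive]].
  by split; [exact: comb_complete_semicombinatory | exact: comb_complete_total_or_passive].
exact: comb_complete_of_semicombinatory skP total_or_passive.
Qed.
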